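(* Let $U=V=W=\mathbb{C}^2$ with bases $\{u_i\},\{v_j\},\{w_k\}$ and dual bases $\{u^i\},\{v^j\},\{w^k\}$, and set $x^i_j=u^i\otimes v_j$, $y^j_k=v^j\otimes w_k$, $z^k_i=w^k\otimes u_i$. Let $A=\langle x^1_2,x^2_1,x^2_2\rangle\subset U^*\otimes V$, $B=V^*\otimes W$, $C=W^*\otimes U$, and $$T_{BCLR}=\sum_{i,j,k=1}^2 x^i_j\otimes y^j_k\otimes z^k_i-x^1_1\otimes(y^1_1\otimes z^1_1+y^1_2\otimes z^2_1)\in A\otimes B\otimes C.$$ For $t\in\mathbb{C}$ define \begin{align*} p_1(t)&=x^1_2\otimes(y^2_2+y^2_1)\otimes(z^2_2+tz^1_1),\\ p_2(t)&=-(x^1_2-tx^2_2)\otimes y^2_2\otimes(z^2_2+t(z^1_1-z^2_1)),\\ p_3(t)&=x^2_1\otimes(y^2_1+ty^1_2)\otimes(z^2_2+z^1_2),\\ p_4(t)&=(x^2_1-tx^2_2)\otimes(-y^2_1+ty^1_1-ty^1_2)\otimes z^1_2,\\ p_5(t)&=-(x^2_1+x^1_2)\otimes y^2_1\otimes z^2_2, \end{align*} so that $T_{BCLR}=\lim_{t\to 0}\frac1t[p_1(t)+\cdots+p_5(t)]$, and let $E^{BCLR}=\lim_{t\to0}\langle p_1(t),\dots,p_5(t)\rangle\in G(5,A\otimes B\otimes C)$. Define the lines \begin{align*} L_{12}&=\mathbb{P}\big(x^1_2\otimes(v^2\otimes W)\otimes z^2_2\big)=\mathbb{P}\big(x^1_2\otimes\langle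 y^2_1,y^2_2\rangle\otimes z^2_2\big),\\ L_{21}&=\mathbb{P}\big(x^2_1\otimes y^2_1\otimes(W^*\otimes u_2)\big)=\mathbb{P}\big(x^2_1\otimes y^2_1\otimes\langle z^1_2,z^2_2\rangle\big),\\ L_{\alpha}&=\mathbb{P}\big(\langle x^2_1,x^1_2\rangle\otimes y^2_1\otimes z^2_2\big). \end{align*} Then: (1) $\mathbb{P}E^{BCLR}\cap Seg(\mathbb{P}A\times\mathbb{P}B\times\mathbb{P}C)=L_{12}\cup L_{21}\cup L_\alpha$; here the $C$-point $z^2_2$ of $L_{12}$ lies in $W^*\otimes u_2$, the $B$-point $y^2_1$ of $L_{21}$ lies in $v^2\otimes W$, and $L_\alpha$ is the unique line contained in $Seg(\mathbb{P}A\times\mathbb{P}B\times\mathbb{P}C)$ that meets both $L_{12}$ and $L_{21}$ (so it lies in their span). (2) $E^{BCLR}=\langle T_{BCLR}\rangle+\hat L_{12}+\hat L_{21}$. (3) $T_{BCLR}\in \hat T_{L_{12}}Seg(\mathbb{P}A\times\mathbb{P}B\times\mathbb{P}C)+\hat T_{L_{21}}Seg(\mathbb{P}A\times\mathbb{P}B\times\mathbb{P}C)$.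
   Context: For a vector space $X$, $\mathbb{P}X$ is the projective space of lines through the origin, $[x]$ the class of $x\neq0$, and for $Y\subset\mathbb{P}X$, $\hat Y\subset X$ is the corresponding cone; $\langle\cdots\rangle$ denotes linear span, and $G(r,X)$ the Grassmannian of $r$-dimensional subspaces of $X$ (the limit of subspaces is taken in this Grassmannian). $Seg(\mathbb{P}A\times\mathbb{P}B\times\mathbb{P}C)\subset\mathbb{P}(A\otimes B\otimes C)$ is the Segre variety of classes of rank one tensors $[a\otimes b\otimes c]$. The affine tangent space at $[a\otimes b\otimes c]$ is $\hat T_{[a\otimes b\otimes c]}Seg=A\otimes b\otimes c+a\otimes B\otimes c+a\otimes b\otimes C$. For a line $L$ contained in the Segre variety, $\hat T_L Seg$ denotes $\hat T_ySeg+\hat T_zSeg$ for any two distinct points $y,z\in L$ (this is independent of the choice). *)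

From mathcomp Require Import all_boot all_order all_algebra all_field.
From mathcomp Require Export complex reals.
Set Implicit Arguments.
Unset Strict Implicit.
Unset Printing Implicit Defensive.
Import Order.TTheory GRing.Theory Num.Theory.
Local Open Scope ring_scope.

Section BCLR.
Variable K : numFieldType.

(* index 1 and 2 of the paper, 0-based *)
Definition o1 : 'I_2 := ord0.
Definition o2 : 'I_2 := ord_max.

(* U^* (x) V, V^* (x) W, W^* (x) U : each is K^(2x2), coordinates indexed by pairs *)
Definition M2 := {ffun ('I_2 * 'I_2) -> K^o}.
(* the ambient space (U^*(x)V) (x) (V^*(x)W) (x) (W^*(x)U), which contains A(x)B(x)C *)
Definition X := {ffun ('I_2 * 'I_2) * ('I_2 * 'I_2) * ('I_2 * 'I_2) -> K^o}.

Definition e2 (i j : 'I_2) : M2 := [ffun p => ((p == (i, j)) : nat)%:R].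
(* x^i_j = u^i (x) v_j,  y^j_k = v^j (x) w_k,  z^k_i = w^k (x) u_i *)
Definition xx (i j : 'I_2) : M2 := e2 i j.
Definition yy (j k : 'I_2) : M2 := e2 j k.
Definition zz (k i : 'I_2) : M2 := e2 k i.

Definition tens (a b c : M2) : X := [ffun p => a p.1.1 * b p.1.2 * c p.2].

Definition tensSub (SA SB SC : {vspace M2}) : {vspace X} :=
  <<[seq tens a bc.1 bc.2 | a <- vbasis SA,
                              bc <- [seq (b, c) | b <- vbasis SB, c <- vbasis SC]]>>%VS.

Definition Aspace : {vspace M2} := <<[:: xx o1 o2; xx o2 o1; xx o2 o2]>>%VS.
Definition Bspace : {vspace M2} := fullv.
Definition Cspace : {vspace M2} := fullv.
Definition ABC : {vspace X} := tensSub Aspace Bspace Cspace.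

Definition T_BCLR : X :=
  \sum_(i < 2) \sum_(j < 2) \sum_(k < 2) tens (xx i j) (yy j k) (zz k i)
  - tens (xx o1 o1) (yy o1 o1 ) (zz o1 o1)
  - tens (xx o1 o1) (yy o1 o2) (zz o2 o1).

Definition p1 (t : K) : X :=
  tens (xx o1 o2) (yy o2 o2 + yy o2 o1) (zz o2 o2 + t *: zz o1 o1).
Definition p2 (t : K) : X :=
  - tens (xx o1 o2 - t *: xx o2 o2) (yy o2 o2)
         (zz o2 o2 + t *: (zz o1 o1 - zz o2 o1)).
Definition p3 (t : K) : X :=
  tens (xx o2 o1) (yy o2 o1 + t *: yy o1 o2) (zz o2 o2 + zz o1 o2).
Definition p4 (t : K) : X :=
  tens (xx o2 o1 - t *: xx o2 o2) (- yy o2 o1 + t *: yy o1 o1 - t *: yy o1 o2)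
       (zz o1 o2).
Definition p5 (t : K) : X :=
  - tens (xx o2 o1 + xx o1 o2) (yy o2 o1) (zz o2 o2).

Definition Ecurve (t : K) : {vspace X} :=
  <<[:: p1 t; p2 t; p3 t; p4 t; p5 t]>>%VS.

Definition near0 (P : K -> Prop) : Prop :=
  exists2 d : K, 0 < d & forall t : K, 0 < `|t| < d -> P t.

Definition cvg0 (f : K -> K) (l : K) : Prop :=
  forall e : K, 0 < e -> near0 (fun t => `|f t - l| < e).

(* E = lim_{t -> 0} Et in the Grassmannian G(r, X): there are bases
   (frames) of Et (t near 0, t <> 0) converging to a basis of E. *)
Definition grass_limit (r : nat) (Et : K -> {vspace X}) (E : {vspace X}) : Prop :=
  exists (f : K -> r.-tuple X) (e : r.-tuple X),
    [/\ near0 (fun t => basis_of (Et t) (f t)),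
        (forall (l : 'I_r) p, cvg0 (fun t => tnth (f t) l p) (tnth e l p)) &
        basis_of E e].

(* v is a (nonzero) point of the cone over Seg(PA x PB x PC) *)
Definition isSeg (v : X) : Prop :=
  exists a b c : M2,
    [/\ a \in Aspace, b \in Bspace, c \in Cspace,
        [/\ a != 0, b != 0 & c != 0] & v = tens a b c].

Definition segTan (a b c : M2) : {vspace X} :=
  (tensSub Aspace <[b]> <[c]> + tensSub <[a]> Bspace <[c]>
   + tensSub <[a]> <[b]> Cspace)%VS.

(* a projective line (2-dim linear subspace) contained in the Segre *)
Definition segLine (L : {vspace X}) : Prop :=
  \dim L = 2 /\ forall v, v \in L -> v != 0 -> isSeg v.

Definition meets (L M : {vspace X}) : Prop :=
  exists2 v, v != 0 & v \in (L :&: M)%VS.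

Definition v2W : {vspace M2} := <<[:: yy o2 o1; yy o2 o2]>>%VS.
Definition Wu2 : {vspace M2} := <<[:: zz o1 o2; zz o2 o2]>>%VS.

Definition hatL12 : {vspace X} := tensSub <[xx o1 o2]> v2W <[zz o2 o2]>.
Definition hatL21 : {vspace X} := tensSub <[xx o2 o1]> <[yy o2 o1]> Wu2.
Definition hatLalpha : {vspace X} :=
  tensSub <<[:: xx o2 o1; xx o1 o2]>>%VS <[yy o2 o1]> <[zz o2 o2]>.

End BCLR.

(* Adding up the five curves gives p1 t + ... + p5 t = t T_BCLR + t^2 S for an explicit S.
   Hence, for t <> 0, E_t is spanned by T_BCLR + t S, -(p3 + p4 + p5), -p2, -p4 and p3 + p4,
   and this frame is dual to five fixed coordinates of A (x) B (x) C for every t.  Its limit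
   frame is T_BCLR together with the points x12 y21 z22, x12 y22 z22 of L12 and x21 y21 z12,
   x21 y21 z22 of L21.  Duality expresses any moving frame of E_t in this one with coordinates
   that converge, so every limit of E_t is <T_BCLR> + L12^ + L21^.
   A vector l T_BCLR + (point of L12^) + (point of L21^) of rank one satisfies the vanishing
   of the 2x2 minors v(a,b,c) v(a',b',c') - v(a',b,c) v(a,b',c'); four of them force l = 0
   and kill every mixed product except that of x12 y21 z22 with x21 y21 z22, which leaves
   L12, L21 and L_alpha.  The same equations show that a line of the Segre variety meeting
   L12 and L21 is L_alpha.  Finally each of the six terms of T_BCLR lies in the tangent space
   at some point of L12 or of L21. *)
From mathcomp Require Import all_boot all_order all_algebra all_field.
From mathcomp Require Import complex reals.
From mathcomp Require Import ring.
Import Order.TTheory GRing.Theory Num.Theory.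
Local Open Scope ring_scope.
Set Implicit Arguments. Unset Strict Implicit.

(** * Coordinates and biorthogonal families *)

Section FfunCoordinates.
Variables (K : pzRingType) (I : finType).
Implicit Types (f g : {ffun I -> K^o}) (q : I).

Lemma ffunDE f g q : (f + g) q = f q + g q. Proof. by rewrite ffunE. Qed.
Lemma ffunNE f q : (- f) q = - f q. Proof. by rewrite ffunE. Qed.
Lemma ffunZE c f q : (c *: f) q = c * f q. Proof. by rewrite ffunE. Qed.

End FfunCoordinates.

Section Biorthogonal.
Variables (K : fieldType) (I : finType) (n : nat).
Variables (s : n.-tuple {ffun I -> K^o}) (k : 'I_n -> I).
Hypothesis s_biorth : forall i j : 'I_n, s`_i (k j) = (i == j)%:R.

Lemma biorth_sum_coord (c : 'I_n -> K) j :
  (\sum_i c i *: s`_i) (k j) = c j.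
Proof.
rewrite sum_ffunE (bigD1 j) //= big1 => [|i ij]; rewrite ffunZE s_biorth.
  by rewrite eqxx mulr1 addr0.
by rewrite (negbTE ij) mulr0.
Qed.

Lemma biorth_free : free s.
Proof.
apply/freeP => c /(congr1 (fun v : {ffun I -> K^o} => v (k _))) c0 j.
by rewrite -(biorth_sum_coord c j) c0 ffunE.
Qed.

Lemma biorth_decomp w : w \in <<s>>%VS -> w = \sum_i w (k i) *: s`_i.
Proof.
move=> /coord_span w_def; rewrite [in LHS]w_def; apply: eq_bigr => i _.
by rewrite [in w (k i)]w_def biorth_sum_coord.
Qed.

End Biorthogonal.

Section Biorthogonal2.
Variables (K : fieldType) (I : finType) (u1 u2 : {ffun I -> K^o}) (k1 k2 : I).
Hypotheses (u1k1 : u1 k1 = 1) (u1k2 : u1 k2 = 0) (u2k1 : u2 k1 = 0) (u2k2 : u2 k2 = 1).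

Let biorth2 (i j : 'I_2) : [tuple u1; u2]`_i (tnth [tuple k1; k2] j) = (i == j)%:R.
Proof. by case: i => [[|[|//]] ?]; case: j => [[|[|//]] ?]. Qed.

Lemma biorth2_free : free [:: u1; u2].
Proof. exact: biorth_free biorth2. Qed.

Lemma biorth2_decomp v : v \in <<[:: u1; u2]>>%VS -> v = v k1 *: u1 + v k2 *: u2.
Proof.
move=> /(coord_span (X := in_tuple [:: u1; u2])) ->.
rewrite big_ord_recl big_ord1 /= !ffunDE !ffunZE u1k1 u1k2 u2k1 u2k2.
by rewrite !mulr1 !mulr0 addr0 add0r.
Qed.

End Biorthogonal2.

Lemma span_morph_subv (K : fieldType) (vT wT : vectType K) (F : vT -> wT)
    (S : {vspace wT}) (s : seq vT) v :
  {morph F : u w / u + w} -> scalable F ->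
  {in s, forall u, F u \in S} -> v \in <<s>>%VS -> F v \in S.
Proof.
move=> FD FZ Fs v_s; rewrite (coord_span (X := in_tuple s) v_s).
have F0 : F 0 = 0 by rewrite -(scale0r 0) FZ scale0r.
rewrite (big_morph F FD F0); apply: memv_suml => i _.
by rewrite FZ memvZ // Fs // mem_nth.
Qed.

Lemma span2_eq (F : fieldType) (vT : vectType F) (U : {vspace vT}) u1 u2 :
  (\dim U <= 2)%N -> u1 \in U -> u2 \in U -> free [:: u1; u2] -> <<[:: u1; u2]>>%VS = U.
Proof.
move=> dimU u1U u2U u_free; apply/eqP; rewrite eqEdim (eqP u_free) dimU andbT.
by apply/span_subvP => u; rewrite !inE => /orP[]/eqP->.
Qed.

Lemma mem_span2 (F : fieldType) (vT : vectType F) (u1 u2 : vT) c1 c2 :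
  c1 *: u1 + c2 *: u2 \in <<[:: u1; u2]>>%VS.
Proof. by rewrite memvD // memvZ // memv_span // !inE eqxx ?orbT. Qed.

(** * Tensors *)

Definition idx := (('I_2 * 'I_2) * ('I_2 * 'I_2) * ('I_2 * 'I_2))%type.

Section Multilinear.
Variable K : numFieldType.
Implicit Types (a b c : M2 K).

Lemma tensE a b c q : tens a b c q = a q.1.1 * b q.1.2 * c q.2.
Proof. by rewrite ffunE. Qed.

Lemma tensDl a a' b c : tens (a + a') b c = tens a b c + tens a' b c.
Proof. by apply/ffunP => q; rewrite !ffunE; ring. Qed.
Lemma tensDm a b b' c : tens a (b + b') c = tens a b c + tens a b' c.
Proof. by apply/ffunP => q; rewrite !ffunE; ring. Qed.
Lemma tensDr a b c c' : tens a b (c + c') = tens a b c + tens a b c'.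
Proof. by apply/ffunP => q; rewrite !ffunE; ring. Qed.
Lemma tensZl k a b c : tens (k *: a) b c = k *: tens a b c.
Proof. by apply/ffunP => q; rewrite !(tensE, ffunZE); ring. Qed.
Lemma tensZm k a b c : tens a (k *: b) c = k *: tens a b c.
Proof. by apply/ffunP => q; rewrite !(tensE, ffunZE); ring. Qed.
Lemma tensZr k a b c : tens a b (k *: c) = k *: tens a b c.
Proof. by apply/ffunP => q; rewrite !(tensE, ffunZE); ring. Qed.
Lemma tensNm a b c : tens a (- b) c = - tens a b c.
Proof. by rewrite -scaleN1r tensZm scaleN1r. Qed.
Lemma tens0l b c : tens 0 b c = 0.
Proof. by rewrite -(scale0r 0) tensZl scale0r. Qed.
Lemma tens0m a c : tens a 0 c = 0.
Proof. by rewrite -(scale0r 0) tensZm scale0r. Qed.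
Lemma tens0r a b : tens a b 0 = 0.
Proof. by rewrite -(scale0r 0) tensZr scale0r. Qed.

Lemma tens_minor a b c (p1 p2 p3 q1 q2 q3 : 'I_2 * 'I_2) :
  tens a b c (p1, p2, p3) * tens a b c (q1, q2, q3) =
  tens a b c (q1, p2, p3) * tens a b c (p1, q2, q3).
Proof. by rewrite !tensE /=; ring. Qed.

Lemma tens_span_subv (sa sb sc : seq (M2 K)) (S : {vspace X K}) a b c :
  (forall a' b' c', a' \in sa -> b' \in sb -> c' \in sc -> tens a' b' c' \in S) ->
  a \in <<sa>>%VS -> b \in <<sb>>%VS -> c \in <<sc>>%VS -> tens a b c \in S.
Proof.
move=> gen_in_S a_sa b_sb c_sc.
apply: (span_morph_subv (F := fun a => tens a b c)) a_sa => [u w|k u|a' a'_sa] /=;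
  rewrite ?tensDl ?tensZl //.
apply: (span_morph_subv (F := fun b => tens a' b c)) b_sb => [u w|k u|b' b'_sb] /=;
  rewrite ?tensDm ?tensZm //.
apply: (span_morph_subv (F := tens a' b')) c_sc => [u w|k u|c' c'_sc] /=;
  rewrite ?tensDr ?tensZr //.
exact: gen_in_S.
Qed.

Lemma mem_tensSub (SA SB SC : {vspace M2 K}) a b c :
  a \in SA -> b \in SB -> c \in SC -> tens a b c \in tensSub SA SB SC.
Proof.
rewrite -{1}(span_basis (vbasisP SA)) -{1}(span_basis (vbasisP SB)).
rewrite -{1}(span_basis (vbasisP SC)).
apply: tens_span_subv => a' b' c' a'A b'B c'C; apply: memv_span.
exact: (allpairs_f _ a'A (allpairs_f (fun b c => (b, c)) b'B c'C)).
Qed.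

Lemma tensSub_subv (SA SB SC : {vspace M2 K}) (S : {vspace X K}) :
  (forall a b c, a \in SA -> b \in SB -> c \in SC -> tens a b c \in S) ->
  (tensSub SA SB SC <= S)%VS.
Proof.
move=> tens_in_S; apply/span_subvP => v /allpairsP[[a bc] [/= aA]].
by case/allpairsP=> [[b c] [/= bB cC ->]] ->; apply: tens_in_S; apply: vbasis_mem.
Qed.

Lemma tensSub_span sa sb sc :
  tensSub <<sa>> <<sb>> <<sc>> =
  <<[seq tens a bc.1 bc.2 | a <- sa, bc <- [seq (b, c) | b <- sb, c <- sc]]>>%VS.
Proof.
apply/eqP; rewrite eqEsubv; apply/andP; split.
  apply: tensSub_subv => a b c; apply: tens_span_subv => {}a {}b {}c aA bB cC.
  apply: memv_span; exact: (allpairs_f _ aA (allpairs_f (fun b c => (b, c)) bB cC)).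
apply/span_subvP => v /allpairsP[[a bc] [/= aA]].
by case/allpairsP=> [[b c] [/= bB cC ->]] ->; apply: mem_tensSub; apply: memv_span.
Qed.

Lemma e2E i j q : e2 K i j q = ((q == (i, j)) : nat)%:R.
Proof. by rewrite ffunE. Qed.

Lemma tens_e2E i j k l m n (q : idx) :
  tens (e2 K i j) (e2 K k l) (e2 K m n) q = (q == ((i, j), (k, l), (m, n)) : nat)%:R.
Proof.
by case: q => [[? ?] ?]; rewrite tensE !e2E /= -!natrM !mulnb !xpair_eqE andbA.
Qed.

End Multilinear.

(** * Limits at 0 *)

Section Limits.
Variable K : numFieldType.
Implicit Types (f g : K -> K) (a b l : K).

Lemma near0_and (P Q : K -> Prop) : near0 P -> near0 Q -> near0 (fun t => P t /\ Q t).
Proof.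
move=> [d1 d1_gt0 P_near] [d2 d2_gt0 Q_near].
suff [d [d_gt0 dd1 dd2]] : exists d, [/\ 0 < d, d <= d1 & d <= d2].
  exists d => // t /andP[t_gt0 td]; split; [apply: P_near | apply: Q_near];
    by rewrite t_gt0 (lt_le_trans td).
by case/orP: (real_leVge (gtr0_real d1_gt0) (gtr0_real d2_gt0)) => d12;
  [exists d1 | exists d2]; rewrite ?lexx.
Qed.

Lemma near0_mono (P Q : K -> Prop) : (forall t, P t -> Q t) -> near0 P -> near0 Q.
Proof. by move=> PQ [d d_gt0 P_near]; exists d => // t /P_near /PQ. Qed.

Lemma near0_neq0 : near0 (fun t : K => t != 0).
Proof. by exists 1 => // t /andP[]; rewrite normr_gt0. Qed.

Lemma near0_exists (P : K -> Prop) : near0 P -> exists t, P t.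
Proof.
move=> [d d_gt0 P_near]; exists (d / 2%:R); apply: P_near.
have d2_gt0 : 0 < d / 2%:R by rewrite divr_gt0 // ltr0n.
by rewrite ger0_norm ?ltW // d2_gt0 ltr_pdivrMr ?ltr0n // ltr_pMr // ltr1n.
Qed.

Lemma cvg0_unique f a b : cvg0 f a -> cvg0 f b -> a = b.
Proof.
move=> fa fb; apply/eqP; apply/negPn/negP => ab.
have e_gt0 : 0 < `|a - b| / 2%:R by rewrite divr_gt0 ?ltr0n // normr_gt0 subr_eq0.
have [t [ta tb]] := near0_exists (near0_and (fa _ e_gt0) (fb _ e_gt0)).
have : `|a - b| < `|a - b| / 2%:R + `|a - b| / 2%:R.
  rewrite {1}(_ : a - b = (f t - b) - (f t - a)); last by ring.
  exact: le_lt_trans (ler_normB _ _) (ltrD tb ta).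
by rewrite -splitr ltxx.
Qed.

Lemma cvg0_near_eq f g l : near0 (fun t => f t = g t) -> cvg0 f l -> cvg0 g l.
Proof.
by move=> fg fl e e_gt0; apply: near0_mono (near0_and fg (fl e e_gt0)) => t [<-].
Qed.

Lemma cvg0_eq f g l : (forall t, f t = g t) -> cvg0 f l -> cvg0 g l.
Proof. by move=> fg; apply: cvg0_near_eq; exists 1. Qed.

Lemma cvg0_cst a : cvg0 (fun _ => a) a.
Proof. by move=> e e_gt0; exists 1 => // t _; rewrite subrr normr0. Qed.

Lemma cvg0_id : cvg0 (fun t : K => t) 0.
Proof. by move=> e e_gt0; exists e => // t /andP[_]; rewrite subr0. Qed.

Lemma cvg0D f g a b : cvg0 f a -> cvg0 g b -> cvg0 (fun t => f t + g t) (a + b).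
Proof.
move=> fa gb e e_gt0.
have e2_gt0 : 0 < e / 2%:R by rewrite divr_gt0 // ltr0n.
apply: near0_mono (near0_and (fa _ e2_gt0) (gb _ e2_gt0)) => t [ft gt].
have -> : f t + g t - (a + b) = (f t - a) + (g t - b) by ring.
by rewrite (splitr e); exact: le_lt_trans (ler_normD _ _) (ltrD ft gt).
Qed.

Lemma cvg0N f a : cvg0 f a -> cvg0 (fun t => - f t) (- a).
Proof. by move=> fa e /(fa e); apply: near0_mono => t; rewrite -opprD normrN. Qed.

Lemma cvg0M f g a b : cvg0 f a -> cvg0 g b -> cvg0 (fun t => f t * g t) (a * b).
Proof.
move=> fa gb e e_gt0.
pose M := `|b| + 1; pose N := `|a| + 1.
have M_gt0 : 0 < M by rewrite ltr_pwDr ?ltr01 ?normr_ge0.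
have N_gt0 : 0 < N by rewrite ltr_pwDr ?ltr01 ?normr_ge0.
have eM_gt0 : 0 < e / 2%:R / M by rewrite !divr_gt0 // ltr0n.
have eN_gt0 : 0 < e / 2%:R / N by rewrite !divr_gt0 // ltr0n.
apply: near0_mono (near0_and (gb _ ltr01) (near0_and (fa _ eM_gt0) (gb _ eN_gt0))).
move=> t [gt1 [ft gt]].
have gtM : `|g t| < M.
  have -> : g t = b + (g t - b) by ring.
  by apply: le_lt_trans (ler_normD _ _) _; rewrite ltrD2l.
have -> : f t * g t - a * b = (f t - a) * g t + a * (g t - b) by ring.
apply: le_lt_trans (ler_normD _ _) _; rewrite !normrM (splitr e).
apply: ltrD.
  have -> : e / 2%:R = e / 2%:R / M * M by field; rewrite lt0r_neq0.
  exact: ltr_pM (normr_ge0 _) (normr_ge0 _) ft gtM.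
have -> : e / 2%:R = N * (e / 2%:R / N) by field; rewrite lt0r_neq0.
by apply: ltr_pM (normr_ge0 _) (normr_ge0 _) _ gt; rewrite ltrDl.
Qed.

Lemma cvg0_sum n (F : 'I_n -> K -> K) (l : 'I_n -> K) :
  (forall i, cvg0 (F i) (l i)) -> cvg0 (fun t => \sum_i F i t) (\sum_i l i).
Proof.
elim: n F l => [|n IHn] F l Fl.
  by rewrite big_ord0; apply: cvg0_eq (cvg0_cst 0) => t; rewrite big_ord0.
rewrite big_ord_recr; apply: cvg0_eq (cvg0D (IHn _ _ (fun i => Fl _)) (Fl ord_max)).
by move=> t; rewrite big_ord_recr.
Qed.

Definition cont0 f := cvg0 f (f 0).

Definition cont0_ffun (I : finType) (F : K -> {ffun I -> K^o}) :=
  forall q, cont0 (fun t => F t q).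

Lemma cont0_ffun_cst (I : finType) (v : {ffun I -> K^o}) : cont0_ffun (fun _ => v).
Proof. by move=> q; apply: cvg0_cst. Qed.

Lemma cont0_ffunD (I : finType) (F G : K -> {ffun I -> K^o}) :
  cont0_ffun F -> cont0_ffun G -> cont0_ffun (fun t => F t + G t).
Proof.
move=> Fc Gc q; rewrite /cont0 ffunE; apply: cvg0_eq (cvg0D (Fc q) (Gc q)) => t.
by rewrite ffunE.
Qed.

Lemma cont0_ffunN (I : finType) (F : K -> {ffun I -> K^o}) :
  cont0_ffun F -> cont0_ffun (fun t => - F t).
Proof.
move=> Fc q; rewrite /cont0 ffunE; apply: cvg0_eq (cvg0N (Fc q)) => t.
by rewrite ffunE.
Qed.

Lemma cont0_ffunZ (I : finType) (s : K -> K) (F : K -> {ffun I -> K^o}) :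
  cont0 s -> cont0_ffun F -> cont0_ffun (fun t => s t *: F t).
Proof.
move=> sc Fc q; rewrite /cont0 ffunZE; apply: cvg0_eq (cvg0M sc (Fc q)) => t.
by rewrite ffunZE.
Qed.

Lemma cont0_ffun_tens (A B C : K -> M2 K) :
  cont0_ffun A -> cont0_ffun B -> cont0_ffun C ->
  cont0_ffun (fun t => tens (A t) (B t) (C t)).
Proof.
move=> Ac Bc Cc q; rewrite /cont0 tensE.
by apply: cvg0_eq (cvg0M (cvg0M (Ac _) (Bc _)) (Cc _)) => t; rewrite tensE.
Qed.

End Limits.

(** * The limit of the curve of subspaces *)

Ltac case_ord2 i := case: i => [[|[|?]] ?] //.

Ltac case_idx q :=
  let i1 := fresh in let i2 := fresh in let i3 := fresh in
  let i4 := fresh in let i5 := fresh in let i6 := fresh in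
  case: q => [[[i1 i2] [i3 i4]] [i5 i6]];
  case_ord2 i1; case_ord2 i2; case_ord2 i3; case_ord2 i4; case_ord2 i5; case_ord2 i6.

Ltac coords := rewrite ?(ffunDE, ffunNE, ffunZE, tensE) /xx /yy /zz ?e2E /=.

Section BCLR.
Variable K : numFieldType.
Local Notation x := (xx K).
Local Notation y := (yy K).
Local Notation z := (zz K).

Lemma T_BCLRE : T_BCLR K =
  tens (x o1 o2) (y o2 o1) (z o1 o1) + tens (x o1 o2) (y o2 o2) (z o2 o1)
  + tens (x o2 o1) (y o1 o1) (z o1 o2) + tens (x o2 o1) (y o1 o2) (z o2 o2)
  + tens (x o2 o2) (y o2 o1) (z o1 o2) + tens (x o2 o2) (y o2 o2) (z o2 o2).
Proof.
have o1E : widen_ord (leqnSn 1) ord_max = o1 by apply: val_inj.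
rewrite /T_BCLR !big_ord_recr !big_ord0 /= !add0r o1E -/o2.
set A := tens _ _ (z o1 o1); set B := tens _ _ (z o2 o1).
by rewrite -(addrA (A + B)) (addrC (A + B)) (addrC A B) addrA !addrK !addrA.
Qed.

Definition S_BCLR : X K :=
  tens (x o2 o2) (y o1 o2 - y o1 o1) (z o1 o2)
  + tens (x o2 o2) (y o2 o2) (z o1 o1 - z o2 o1).

Lemma psumE t :
  p1 t + p2 t + p3 t + p4 t + p5 t = t *: T_BCLR K + t ^+ 2 *: S_BCLR.
Proof.
apply/ffunP => q; rewrite /p1 /p2 /p3 /p4 /p5 /S_BCLR T_BCLRE; coords.
by case_idx q; rewrite /=; ring.
Qed.

Lemma scaled_psumE t : t != 0 ->
  t^-1 *: (p1 t + p2 t + p3 t + p4 t + p5 t) = T_BCLR K + t *: S_BCLR.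
Proof.
move=> t_neq0; rewrite psumE scalerDr !scalerA mulVf // scale1r.
by rewrite expr2 mulrA mulVf // mul1r.
Qed.

Definition l12a : X K := tens (x o1 o2) (y o2 o1) (z o2 o2).
Definition l12b : X K := tens (x o1 o2) (y o2 o2) (z o2 o2).
Definition l21a : X K := tens (x o2 o1) (y o2 o1) (z o1 o2).
Definition l21b : X K := tens (x o2 o1) (y o2 o1) (z o2 o2).

Definition frame t : 5.-tuple (X K) :=
  [tuple T_BCLR K + t *: S_BCLR; - (p3 t + p4 t + p5 t); - p2 t; - p4 t; p3 t + p4 t].

Definition limit_frame : 5.-tuple (X K) := [tuple T_BCLR K; l12a; l12b; l21a; l21b].

Definition kT : idx := ((o1, o2), (o2, o1), (o1, o1)).
Definition k12a : idx := ((o1, o2), (o2, o1), (o2, o2)).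
Definition k12b : idx := ((o1, o2), (o2, o2), (o2, o2)).
Definition k21a : idx := ((o2, o1), (o2, o1), (o1, o2)).
Definition k21b : idx := ((o2, o1), (o2, o1), (o2, o2)).

Definition frame_idx : 5.-tuple idx := [tuple kT; k12a; k12b; k21a; k21b].

Lemma frame_biorth t (i j : 'I_5) : (frame t)`_i (tnth frame_idx j) = (i == j)%:R.
Proof.
rewrite /frame /p2 /p3 /p4 /p5 /S_BCLR T_BCLRE.
case: i => [[|[|[|[|[|//]]]]] ?]; coords;
  by case: j => [[|[|[|[|[|//]]]]] ?]; rewrite /=; ring.
Qed.

Lemma frame0 : frame 0 = limit_frame.
Proof.
apply: val_inj; rewrite /= /p2 /p3 /p4 /p5 !scale0r !subr0 !addr0 !tensDr tensDl tensNm.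
by rewrite -/l12a -/l12b -/l21a -/l21b !opprK addrK opprB [l21b + _]addrC !addrK.
Qed.

Lemma limit_frame_biorth (i j : 'I_5) :
  limit_frame`_i (tnth frame_idx j) = (i == j)%:R.
Proof. by rewrite -frame0 frame_biorth. Qed.

Lemma frame_basis t : t != 0 -> basis_of (Ecurve t) (frame t).
Proof.
move=> t_neq0; have frame_free := biorth_free (frame_biorth t).
rewrite /basis_of frame_free andbT eqEdim (eqP frame_free) size_tuple.
rewrite [X in _ && X](dim_span [:: p1 t; p2 t; p3 t; p4 t; p5 t]) andbT.
have [p1E p2E p3E p4E p5E] :
    [/\ p1 t \in Ecurve t, p2 t \in Ecurve t, p3 t \in Ecurve t,
        p4 t \in Ecurve t & p5 t \in Ecurve t].
  by split; apply: memv_span; rewrite !inE eqxx ?orbT.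
apply/span_subvP => _ /(nthP 0)[i i_lt5 <-].
case: i i_lt5 => [|[|[|[|[|//]]]]] _ /=; first rewrite -scaled_psumE // memvZ.
(* at most one [memvN]: [p2 t] and [p5 t] are themselves opposites *)
all: by rewrite 1?memvN ?memvD.
Qed.

Ltac cont0_tac := repeat match goal with
  | |- cont0_ffun (fun _ => ?v) => apply: cont0_ffun_cst
  | |- cont0_ffun (fun t => @?F t + @?G t) => apply: (cont0_ffunD (F := F) (G := G))
  | |- cont0_ffun (fun t => - @?F t) => apply: (cont0_ffunN (F := F))
  | |- cont0_ffun (fun t => @?s t *: @?F t) => apply: (cont0_ffunZ (s := s) (F := F))
  | |- cont0_ffun (fun t => tens (@?A t) (@?B t) (@?C t)) =>
      apply: (cont0_ffun_tens (A := A) (B := B) (C := C))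
  | |- cont0 (fun t => t) => exact: cvg0_id
  end.

Lemma frame_cont0 (i : 'I_5) : cont0_ffun (fun t => (frame t)`_i).
Proof.
by case: i => [[|[|[|[|[|//]]]]] ?]; rewrite /= ?/p2 ?/p3 ?/p4 ?/p5; cont0_tac.
Qed.

Lemma scaled_psum_cvg0 q :
  cvg0 (fun t => (t^-1 *: (p1 t + p2 t + p3 t + p4 t + p5 t)) q) (T_BCLR K q).
Proof.
have := frame_cont0 ord0 q; rewrite /cont0 /= scale0r addr0; apply: cvg0_near_eq.
by apply: near0_mono (near0_neq0 K) => t t_neq0; rewrite scaled_psumE.
Qed.

Lemma limit_frame_free : free limit_frame.
Proof. exact: biorth_free limit_frame_biorth. Qed.

Lemma Ecurve_decomp t w : t != 0 -> w \in Ecurve t ->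
  w = \sum_i w (tnth frame_idx i) *: (frame t)`_i.
Proof. by move=> /frame_basis /andP[/eqP <- _] /(biorth_decomp (frame_biorth t)). Qed.

Lemma grass_limit_subv E : grass_limit 5 (@Ecurve K) E -> (E <= <<limit_frame>>)%VS.
Proof.
case=> f [e [f_basis f_cvg /andP[/eqP <- _]]].
apply/span_subvP => _ /tnthP[l ->].
have -> : tnth e l = \sum_i tnth e l (tnth frame_idx i) *: limit_frame`_i.
  apply/ffunP => q; rewrite sum_ffunE; under eq_bigr do rewrite ffunZE.
  apply: (cvg0_unique (f_cvg l q)).
  apply: (cvg0_near_eq (f := fun t =>
    \sum_i tnth (f t) l (tnth frame_idx i) * (frame t)`_i q)); last first.
    apply: cvg0_sum => i; rewrite -frame0.
    exact: cvg0M (f_cvg _ _) (frame_cont0 i q).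
  apply: near0_mono (near0_and (near0_neq0 K) f_basis) => t [t_neq0 /andP[/eqP ft_span _]].
  have ftl_in : tnth (f t) l \in Ecurve t by rewrite -ft_span memv_span // mem_tnth.
  rewrite [in RHS](Ecurve_decomp t_neq0 ftl_in) sum_ffunE.
  by apply: eq_bigr => i _; rewrite ffunZE.
by rewrite memv_suml // => i _; rewrite memvZ // memv_span // mem_nth.
Qed.

Lemma grass_limitE E : grass_limit 5 (@Ecurve K) E -> E = <<limit_frame>>%VS.
Proof.
move=> E_lim; apply/eqP; rewrite eqEdim grass_limit_subv //=.
case: E_lim => f [e [_ _ e_basis]].
by rewrite (eqP limit_frame_free) (size_basis e_basis) size_tuple.
Qed.

Lemma grass_limit_frame : grass_limit 5 (@Ecurve K) <<limit_frame>>%VS.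
Proof.
exists frame, limit_frame; split.
- by apply: near0_mono (near0_neq0 K) => t; apply: frame_basis.
- move=> l q; rewrite -frame0 (tnth_nth 0).
  by apply: cvg0_eq (frame_cont0 l q) => t; rewrite (tnth_nth 0).
- by rewrite /basis_of eqxx limit_frame_free.
Qed.

End BCLR.

(** * Rank-one points of the limit *)

Section SegreIntersection.
Variable K : numFieldType.
Local Notation x := (xx K).
Local Notation y := (yy K).
Local Notation z := (zz K).

Lemma isSeg_minor (v : X K) : isSeg v -> forall a b c a' b' c',
  v (a, b, c) * v (a', b', c') = v (a', b, c) * v (a, b', c').
Proof. by case=> ? [? [? [_ _ _ _ ->]]] *; apply: tens_minor. Qed.

Lemma T_BCLR_at q : T_BCLR K q =
  (q == ((o1, o2), (o2, o1), (o1, o1)) : nat)%:R + (q == ((o1, o2), (o2, o2), (o2, o1)) : nat)%:R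
  + (q == ((o2, o1), (o1, o1), (o1, o2)) : nat)%:R + (q == ((o2, o1), (o1, o2), (o2, o2)) : nat)%:R
  + (q == ((o2, o2), (o2, o1), (o1, o2)) : nat)%:R + (q == ((o2, o2), (o2, o2), (o2, o2)) : nat)%:R.
Proof. by rewrite T_BCLRE 5!ffunDE !tens_e2E. Qed.

Lemma isSeg_limit_comb l b1 b2 g1 g2 :
  isSeg (l *: T_BCLR K + b1 *: l12a K + b2 *: l12b K + g1 *: l21a K + g2 *: l21b K) ->
  l = 0 /\ [\/ g1 = 0 /\ g2 = 0, b1 = 0 /\ b2 = 0 | b2 = 0 /\ g1 = 0].
Proof.
have v_at q : (l *: T_BCLR K + b1 *: l12a K + b2 *: l12b K + g1 *: l21a K + g2 *: l21b K) q
    = l * T_BCLR K q + b1 * (q == k12a : nat)%:R + b2 * (q == k12b : nat)%:R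
      + g1 * (q == k21a : nat)%:R + g2 * (q == k21b : nat)%:R.
  (* bounded counts: [!ffunDE] would also unfold the sum defining [T_BCLR] *)
  by rewrite 4!ffunDE 5!ffunZE !tens_e2E.
move=> /isSeg_minor minor.
have := minor (o2, o2) (o2, o1) (o1, o2) (o2, o1) (o1, o1) (o1, o2).
have := minor (o1, o2) (o2, o2) (o2, o2) (o2, o1) (o2, o1) (o1, o2).
have := minor (o1, o2) (o2, o2) (o2, o2) (o2, o1) (o2, o1) (o2, o2).
have := minor (o1, o2) (o2, o1) (o2, o2) (o2, o1) (o2, o1) (o1, o2).
rewrite !v_at !T_BCLR_at /=.
rewrite !(mulr0, mul0r, mulr1, addr0, add0r) => b1g1 b2g2 b2g1 /eqP.
rewrite mulf_eq0 orbb => /eqP l0; split=> //.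
have [b2_0|b2_neq0] := eqVneq b2 0; last first.
  by constructor 1; split; apply: (mulfI b2_neq0); rewrite mulr0.
have [b1_0|b1_neq0] := eqVneq b1 0; first by constructor 2.
by constructor 3; split=> //; apply: (mulfI b1_neq0); rewrite mulr0.
Qed.

Lemma limit_frame_decomp v : v \in <<limit_frame K>>%VS ->
  v = v kT *: T_BCLR K + v k12a *: l12a K + v k12b *: l12b K
      + v k21a *: l21a K + v k21b *: l21b K.
Proof.
move=> /(biorth_decomp (limit_frame_biorth K)) {1}->.
by rewrite 4!big_ord_recr big_ord1.
Qed.

Lemma hatL12E : hatL12 K = <<[:: l12a K; l12b K]>>%VS.
Proof. by rewrite /hatL12 -!span_seq1 tensSub_span. Qed.
Lemma hatL21E : hatL21 K = <<[:: l21a K; l21b K]>>%VS.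
Proof. by rewrite /hatL21 -!span_seq1 tensSub_span. Qed.
Lemma hatLalphaE : hatLalpha K = <<[:: l21b K; l12a K]>>%VS.
Proof. by rewrite /hatLalpha -!span_seq1 tensSub_span. Qed.

Lemma hatL12_decomp v : v \in hatL12 K -> v = v k12a *: l12a K + v k12b *: l12b K.
Proof. by rewrite hatL12E; apply: biorth2_decomp; rewrite tens_e2E. Qed.
Lemma hatL21_decomp v : v \in hatL21 K -> v = v k21a *: l21a K + v k21b *: l21b K.
Proof. by rewrite hatL21E; apply: biorth2_decomp; rewrite tens_e2E. Qed.
Lemma hatLalpha_decomp v : v \in hatLalpha K -> v = v k21b *: l21b K + v k12a *: l12a K.
Proof. by rewrite hatLalphaE; apply: biorth2_decomp; rewrite tens_e2E. Qed.

Lemma dim_hatLalpha : \dim (hatLalpha K) = 2.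
Proof.
by rewrite hatLalphaE (eqP (biorth2_free (k1 := k21b) (k2 := k12a) _ _ _ _)) //;
  rewrite tens_e2E.
Qed.

Lemma xx_in_Aspace i j : (i, j) != (o1, o1) -> x i j \in Aspace K.
Proof.
by move=> ij; apply: memv_span; case: i j ij => [[|[|//]] ?] [[|[|//]] ?];
  rewrite !inE ?eqxx ?orbT.
Qed.

Lemma isSeg_tens a b c : a \in Aspace K -> tens a b c != 0 -> isSeg (tens a b c).
Proof.
move=> aA abc_neq0; exists a, b, c; split; rewrite ?memvf //.
by split; apply: contraNneq abc_neq0 => ->; rewrite ?tens0l ?tens0m ?tens0r.
Qed.

Lemma hatL12_isSeg v : v \in hatL12 K -> v != 0 -> isSeg v.
Proof.
move=> /hatL12_decomp ->; rewrite /l12a /l12b -!tensZm -tensDm.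
by apply: isSeg_tens; rewrite xx_in_Aspace.
Qed.

Lemma hatL21_isSeg v : v \in hatL21 K -> v != 0 -> isSeg v.
Proof.
move=> /hatL21_decomp ->; rewrite /l21a /l21b -!tensZr -tensDr.
by apply: isSeg_tens; rewrite xx_in_Aspace.
Qed.

Lemma hatLalpha_isSeg v : v \in hatLalpha K -> v != 0 -> isSeg v.
Proof.
move=> /hatLalpha_decomp ->; rewrite /l21b /l12a -!tensZl -tensDl.
by apply: isSeg_tens; rewrite memvD // memvZ // xx_in_Aspace.
Qed.

Lemma isSeg_limit_frame_lines v : v \in <<limit_frame K>>%VS -> isSeg v ->
  [\/ v \in hatL12 K, v \in hatL21 K | v \in hatLalpha K].
Proof.
move=> /limit_frame_decomp v_def; rewrite v_def.
move=> /isSeg_limit_comb [-> [[-> ->] | [-> ->] | [-> ->]]];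
  rewrite !scale0r ?add0r ?addr0.
- by constructor 1; rewrite hatL12E mem_span2.
- by constructor 2; rewrite hatL21E mem_span2.
- by constructor 3; rewrite hatLalphaE addrC mem_span2.
Qed.

Lemma hatLalpha_subv : (hatLalpha K <= hatL12 K + hatL21 K)%VS.
Proof.
rewrite hatLalphaE hatL12E hatL21E; apply/span_subvP => u.
by rewrite !inE => /orP[]/eqP->; [apply: (subvP (addvSr _ _)) | apply: (subvP (addvSl _ _))];
  rewrite memv_span // !inE eqxx ?orbT.
Qed.

Lemma hatL12_hatL21_subv : (hatL12 K + hatL21 K <= <<limit_frame K>>)%VS.
Proof.
rewrite subv_add hatL12E hatL21E; apply/andP; split; apply/span_subvP => u;
  by rewrite !inE => /orP[]/eqP->; rewrite memv_span // !inE eqxx ?orbT.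
Qed.

Lemma hatL12_hatL21_cap : (hatL12 K :&: hatL21 K = 0)%VS.
Proof.
apply/eqP; rewrite -subv0; apply/subvP => u /[!memv_cap] /andP[u12 u21].
rewrite memv0 (hatL12_decomp u12).
rewrite [in u k12a](hatL21_decomp u21) [in u k12b](hatL21_decomp u21).
by rewrite !ffunDE !ffunZE !tens_e2E /= !mulr0 addr0 !scale0r addr0.
Qed.

Lemma limit_frame_isSeg v : v != 0 ->
  (v \in <<limit_frame K>>%VS /\ isSeg v) <->
  [\/ v \in hatL12 K, v \in hatL21 K | v \in hatLalpha K].
Proof.
move=> v_neq0; split=> [[] | v_lines]; first exact: isSeg_limit_frame_lines.
split; last by case: v_lines => [/hatL12_isSeg | /hatL21_isSeg | /hatLalpha_isSeg]; apply.
apply: (subvP hatL12_hatL21_subv).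
case: v_lines => [|| /(subvP hatLalpha_subv)] //.
  exact/(subvP (addvSl _ _)).
exact/(subvP (addvSr _ _)).
Qed.

Lemma l12a_neq0 : l12a K != 0.
Proof.
by apply/eqP => /(congr1 (fun v : X K => v k12a))/eqP; rewrite tens_e2E eqxx ffunE pnatr_eq0.
Qed.

Lemma l21b_neq0 : l21b K != 0.
Proof.
by apply/eqP => /(congr1 (fun v : X K => v k21b))/eqP; rewrite tens_e2E eqxx ffunE pnatr_eq0.
Qed.

Lemma hatLalpha_meets_hatL12 : meets (hatLalpha K) (hatL12 K).
Proof.
exists (l12a K); rewrite ?l12a_neq0 // memv_cap hatLalphaE hatL12E.
by rewrite !memv_span // !inE eqxx ?orbT.
Qed.

Lemma hatLalpha_meets_hatL21 : meets (hatLalpha K) (hatL21 K).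
Proof.
exists (l21b K); rewrite ?l21b_neq0 // memv_cap hatLalphaE hatL21E.
by rewrite !memv_span // !inE eqxx ?orbT.
Qed.

Lemma segLine_meets_hatL12_hatL21 L :
  segLine L -> meets L (hatL12 K) -> meets L (hatL21 K) -> L = hatLalpha K.
Proof.
case=> dimL L_seg [v v_neq0 /[!memv_cap]/andP[vL v12]] [w w_neq0 /[!memv_cap]/andP[wL w21]].
have vw_neq0 : v + w != 0.
  apply: contraNneq v_neq0 => /eqP; rewrite addr_eq0 => /eqP v_w.
  by rewrite -memv0 -hatL12_hatL21_cap memv_cap v12 v_w memvN.
have := L_seg _ (memvD vL wL) vw_neq0.
move: v_neq0 vL w_neq0 wL; rewrite (hatL12_decomp v12) (hatL21_decomp w21).
move: (v k12a) (v k12b) (w k21a) (w k21b) => b1 b2 g1 g2 v_neq0 vL w_neq0 wL.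
have -> : b1 *: l12a K + b2 *: l12b K + (g1 *: l21a K + g2 *: l21b K) =
    0 *: T_BCLR K + b1 *: l12a K + b2 *: l12b K + g1 *: l21a K + g2 *: l21b K.
  by rewrite scale0r add0r !addrA.
case/isSeg_limit_comb => _ [[g1_0 g2_0] | [b1_0 b2_0] | [b2_0 g1_0]].
- by rewrite g1_0 g2_0 !scale0r addr0 eqxx in w_neq0.
- by rewrite b1_0 b2_0 !scale0r addr0 eqxx in v_neq0.
rewrite b2_0 g1_0 !scale0r addr0 add0r in v_neq0 w_neq0 vL wL.
have b1_neq0 : b1 != 0 by apply: contraNneq v_neq0 => ->; rewrite scale0r.
have g2_neq0 : g2 != 0 by apply: contraNneq w_neq0 => ->; rewrite scale0r.
apply/eqP; rewrite eq_sym eqEdim dimL dim_hatLalpha leqnn andbT hatLalphaE.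
apply/span_subvP => u; rewrite !inE => /orP[]/eqP->.
  by rewrite -(scalerK g2_neq0 (l21b K)) memvZ.
by rewrite -(scalerK b1_neq0 (l12a K)) memvZ.
Qed.

Lemma limit_frame_span : <<limit_frame K>>%VS = (<[T_BCLR K]> + hatL12 K + hatL21 K)%VS.
Proof. by rewrite hatL12E hatL21E -span_seq1 -!span_cat. Qed.

Lemma limit_frame_ABC : (<<limit_frame K>> <= ABC K)%VS.
Proof.
have xx_ABC i j b c : (i, j) != (o1, o1) -> tens (x i j) b c \in ABC K.
  by move=> ij; apply: mem_tensSub; rewrite ?memvf ?xx_in_Aspace.
apply/span_subvP => u; rewrite !inE => /or4P[|||/orP[]] /eqP->;
  by rewrite ?T_BCLRE ?memvD ?xx_ABC.
Qed.

End SegreIntersection.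

(** * Tangent spaces *)

Section Tangent.
Variable K : numFieldType.
Local Notation x := (xx K).
Local Notation y := (yy K).
Local Notation z := (zz K).

Lemma mem_segTanA (a' a b c : M2 K) : a' \in Aspace K -> tens a' b c \in segTan a b c.
Proof.
by move=> a'A; apply: (subvP (addvSl _ _)); apply: (subvP (addvSl _ _));
  rewrite mem_tensSub ?memv_line.
Qed.

Lemma mem_segTanB (a b' b c : M2 K) : tens a b' c \in segTan a b c.
Proof.
by apply: (subvP (addvSl _ _)); apply: (subvP (addvSr _ _));
  rewrite mem_tensSub ?memv_line ?memvf.
Qed.

Lemma mem_segTanC (a b c' c : M2 K) : tens a b c' \in segTan a b c.
Proof.
by apply: (subvP (addvSr _ _)); rewrite mem_tensSub ?memv_line ?memvf.
Qed.

Lemma T_BCLR_in_tangents b1 b2 c1 c2 :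
  b1 \in v2W K -> b2 \in v2W K -> free [:: b1; b2] ->
  c1 \in Wu2 K -> c2 \in Wu2 K -> free [:: c1; c2] ->
  T_BCLR K \in (segTan (x o1 o2) b1 (z o2 o2) + segTan (x o1 o2) b2 (z o2 o2)
                + segTan (x o2 o1) (y o2 o1) c1 + segTan (x o2 o1) (y o2 o1) c2)%VS.
Proof.
move=> b1V b2V b_free c1W c2W c_free.
have v2WE : v2W K = <<[:: b1; b2]>>%VS by rewrite (span2_eq (U := v2W K)) // dim_span.
have Wu2E : Wu2 K = <<[:: c1; c2]>>%VS by rewrite (span2_eq (U := Wu2 K)) // dim_span.
set S := (_ + _)%VS.
have := subvv S; rewrite {1}/S 3!subv_add => /andP[/andP[/andP[T1S T2S] T3S] T4S].
have tens_v2W a b c : b \in v2W K ->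
    tens a b1 c \in S -> tens a b2 c \in S -> tens a b c \in S.
  rewrite v2WE => bV ab1c ab2c.
  apply: tens_span_subv (memv_span (mem_head a [::])) bV (memv_span (mem_head c [::])).
  by move=> a' b' c' /[!inE] /eqP-> /orP[]/eqP-> /eqP->.
have tens_Wu2 a b c : c \in Wu2 K ->
    tens a b c1 \in S -> tens a b c2 \in S -> tens a b c \in S.
  rewrite Wu2E => cW abc1 abc2.
  apply: tens_span_subv (memv_span (mem_head a [::])) (memv_span (mem_head b [::])) cW.
  by move=> a' b' c' /[!inE] /eqP-> /eqP-> /orP[]/eqP->.
have y2V j : y o2 j \in v2W K.
  by apply: memv_span; case: j => [[|[|//]] ?]; rewrite !inE eqxx ?orbT.
have z2W k : z k o2 \in Wu2 K.
  by apply: memv_span; case: k => [[|[|//]] ?]; rewrite !inE eqxx ?orbT.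
have x22A : x o2 o2 \in Aspace K by rewrite xx_in_Aspace.
rewrite T_BCLRE !memvD //.
- by apply: tens_v2W; [|apply: (subvP T1S) | apply: (subvP T2S)]; rewrite ?mem_segTanC.
- by apply: tens_v2W; [|apply: (subvP T1S) | apply: (subvP T2S)]; rewrite ?mem_segTanC.
- by apply: tens_Wu2; [|apply: (subvP T3S) | apply: (subvP T4S)]; rewrite ?mem_segTanB.
- by apply: tens_Wu2; [|apply: (subvP T3S) | apply: (subvP T4S)]; rewrite ?mem_segTanB.
- by apply: tens_Wu2; [|apply: (subvP T3S) | apply: (subvP T4S)]; rewrite ?mem_segTanA.
- by apply: tens_v2W; [|apply: (subvP T1S) | apply: (subvP T2S)]; rewrite ?mem_segTanA.
Qed.

End Tangent.

Theorem mainTheorem2 (R : realType) :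
  (* T_BCLR = lim_{t->0} (1/t)(p_1(t) + ... + p_5(t)) *)
  (forall q, cvg0 (fun t : R[i] => (t^-1 *: (p1 t + p2 t + p3 t + p4 t + p5 t)) q)
                  (T_BCLR R[i] q)) /\
  (* the limit E^BCLR exists in G(5, A (x) B (x) C) *)
  (exists E, grass_limit 5 (@Ecurve R[i]) E) /\
  (* side facts of (1) *)
  (zz R[i] o2 o2 \in Wu2 R[i] /\ yy R[i] o2 o1 \in v2W R[i]) /\
  (* L_alpha is the unique line in the Segre meeting L_12 and L_21,
     and it lies in their span *)
  [/\ segLine (hatLalpha R[i]), meets (hatLalpha R[i]) (hatL12 R[i]),
      meets (hatLalpha R[i]) (hatL21 R[i]),
      (forall L : {vspace X R[i]}, segLine L -> meets L (hatL12 R[i]) ->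
          meets L (hatL21 R[i]) -> L = hatLalpha R[i]) &
      (hatLalpha R[i] <= hatL12 R[i] + hatL21 R[i])%VS] /\
  (* (3) for any two distinct points on L_12 and any two on L_21 *)
  (forall b1 b2 c1 c2 : M2 R[i],
      b1 \in v2W R[i] -> b2 \in v2W R[i] -> free [:: b1; b2] ->
      c1 \in Wu2 R[i] -> c2 \in Wu2 R[i] -> free [:: c1; c2] ->
      T_BCLR R[i] \in
        (segTan (xx R[i] o1 o2) b1 (zz R[i] o2 o2)
         + segTan (xx R[i] o1 o2) b2 (zz R[i] o2 o2)
         + segTan (xx R[i] o2 o1) (yy R[i] o2 o1) c1
         + segTan (xx R[i] o2 o1) (yy R[i] o2 o1) c2)%VS) /\
  forall E : {vspace X R[i]}, grass_limit 5 (@Ecurve R[i]) E ->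
    [/\ (* (1) P E^BCLR meets the Segre exactly in L_12 u L_21 u L_alpha *)
        (forall v : X R[i], v != 0 ->
           (v \in E /\ isSeg v) <->
           [\/ v \in hatL12 R[i], v \in hatL21 R[i] | v \in hatLalpha R[i]]),
        (* E^BCLR lies in G(5, A (x) B (x) C) *)
        (E <= ABC R[i])%VS &
        (* (2) *)
        E = (<[T_BCLR R[i]]> + hatL12 R[i] + hatL21 R[i])%VS].
Proof.
split; first exact: scaled_psum_cvg0.
split; first by exists <<limit_frame _>>%VS; apply: grass_limit_frame.
split; first by split; apply: memv_span; rewrite !inE eqxx ?orbT.
split.
  split; [| exact: hatLalpha_meets_hatL12 | exact: hatLalpha_meets_hatL21 |
           exact: segLine_meets_hatL12_hatL21 | exact: hatLalpha_subv].
  by split=> [|v]; [exact: dim_hatLalpha | exact: hatLalpha_isSeg].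
split; first exact: T_BCLR_in_tangents.
move=> E /grass_limitE ->.
by split; [exact: limit_frame_isSeg | exact: limit_frame_ABC | exact: limit_frame_span].
Qed.
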